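(* Let $\beta$ be an uncountable regular ordinal (so $\mathrm{cf}(\beta)>\omega$), let $j\in\{2,3,4\}$ and $k<j$. Then the ordinal space $\beta\cdot j+1$ is not cleavable over $\beta\cdot k+1$.
   Context: A space $X$ is cleavable over $Y$ if for every $A\subseteq X$ there is a continuous $f:X\to Y$ with $f(A)\cap f(X\setminus A)=\emptyset$. Ordinals carry the order topology; $\beta\cdot j$ is ordinal multiplication. *)

From Stdlib Require Import Arith.

Section OrderTop.
Variables (X : Type) (lt : X -> X -> Prop).
Definition le_of (x y : X) : Prop := lt x y \/ x = y.

Definition ord_open (U : X -> Prop) : Prop :=
  forall x, U x ->
    ((forall y, ~ lt y x) \/
       exists a, lt a x /\ forall z, lt a z -> le_of z x -> U z) /\
    ((forall y, ~ lt x y) \/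
       exists b, lt x b /\ forall z, le_of x z -> lt z b -> U z).
End OrderTop.

Definition ord_continuous {X Y : Type} (ltX : X -> X -> Prop)
  (ltY : Y -> Y -> Prop) (f : X -> Y) : Prop :=
  forall V : Y -> Prop, ord_open _ ltY V -> ord_open _ ltX (fun x => V (f x)).

Definition cleavable {X Y : Type} (ltX : X -> X -> Prop)
  (ltY : Y -> Y -> Prop) : Prop :=
  forall A : X -> Prop, exists f : X -> Y,
    ord_continuous ltX ltY f /\
    forall x y, A x -> ~ A y -> f x <> f y.

(* A well-ordered type (B, ltB) represents the ordinal beta = its order type. *)
Definition well_order {B : Type} (ltB : B -> B -> Prop) : Prop :=
  well_founded ltB /\
  (forall x, ~ ltB x x) /\
  (forall x y z, ltB x y -> ltB y z -> ltB x z) /\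
  (forall x y, ltB x y \/ x = y \/ ltB y x).

Definition uncountable (B : Type) : Prop :=
  ~ exists f : B -> nat, forall x y, f x = f y -> x = y.

(* regular: cf(beta) = beta, i.e. no map from a proper initial segment
   {x | x < b} (= an ordinal gamma < beta) into beta is cofinal. *)
Definition regular {B : Type} (ltB : B -> B -> Prop) : Prop :=
  forall (b : B) (g : {x : B | ltB x b} -> B),
    exists c, forall x, ltB (g x) c.

(* The ordinal beta*j + 1: points Some (i, a) stand for beta*i + a
   (i < j, a < beta), and None for the top point beta*j. *)
Definition ordpt (B : Type) (j : nat) : Type :=
  option ({i : nat | i < j} * B).

Definition ordpt_lt {B : Type} (ltB : B -> B -> Prop) (j : nat)
  (x y : ordpt B j) : Prop :=
  match x, y with
  | Some (i, a), Some (i', a') =>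
      proj1_sig i < proj1_sig i' \/ (proj1_sig i = proj1_sig i' /\ ltB a a')
  | Some _, None => True
  | None, _ => False
  end.

From Stdlib Require Import Arith Lia List Classical ClassicalEpsilon.

(* Let A consist of the non-limit points of blocks 0 and 1, the limit points of
   blocks 2 and 3, and the top point iff j >= 3, and let f be continuous with f(A)
   disjoint from the image of the complement.  Both A and its complement are
   cofinal in every block, so f is not eventually constant along a block; since
   cf(beta) > omega, its limit along block i must then be the end of a target
   block m(i), approached from inside that block (tends_to_classify).  As k < j,
   two blocks i < i' have m(i) = m(i') (pigeonhole_blocks).  If A separates the
   ends of blocks i and i', this contradicts f(end i) = f(end i').  Otherwise A
   separates their limit points; but iterating a common closing function omega
   times yields a limit a with f(i,a) = (m,a) = f(i',a) (common_fixed_point). *)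

Lemma sig_nat_eq (n : nat) (a b : {i : nat | i < n}) :
  proj1_sig a = proj1_sig b -> a = b.
Proof.
  destruct a as [a pa], b as [b pb]; simpl; intros <-.
  f_equal; apply le_unique.
Qed.

Lemma upper_ray_open {X : Type} (lt : X -> X -> Prop) :
  (forall x y z, lt x y -> lt y z -> lt x z) -> forall a, ord_open X lt (lt a).
Proof.
  intros tr a z hz. split.
  - right. exists a. split; auto.
  - destruct (classic (exists b, lt z b)) as [[b hb]|hn].
    + right. exists b. split; auto. intros w [hw| <-] _; eauto.
    + left. intros y hy. apply hn; eauto.
Qed.

Lemma lower_ray_open {X : Type} (lt : X -> X -> Prop) :
  (forall x y z, lt x y -> lt y z -> lt x z) -> forall b, ord_open X lt (fun z => lt z b).
Proof.
  intros tr b z hz. split.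
  - destruct (classic (exists a, lt a z)) as [[a ha]|hn].
    + right. exists a. split; auto. intros w _ [hw| ->]; eauto.
    + left. intros y hy. apply hn; eauto.
  - right. exists b. split; auto.
Qed.

Lemma nat_left_inverse {T : Type} (t : nat -> T) :
  (forall n m, t n = t m -> n = m) -> exists G : T -> nat, forall n, G (t n) = n.
Proof.
  intro tinj.
  assert (H : forall x, exists n, forall m, x = t m -> x = t n).
  { intro x. destruct (classic (exists m, x = t m)) as [[m hm]|hm].
    - exists m. intros; exact hm.
    - exists 0. intros m e. exfalso. apply hm. now exists m. }
  destruct (choice _ H) as [G hG]. exists G. intro n.
  symmetry. apply tinj. exact (hG (t n) n eq_refl).
Qed.

Lemma pigeonhole (m : nat -> nat) j k :
  k < j -> (forall i, i < j -> m i < k) -> exists i i', i < i' < j /\ m i = m i'.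
Proof.
  intros hk hm. apply NNPP; intro hinj.
  assert (nodup : NoDup (map m (seq 0 j))).
  { apply NoDup_map_NoDup_ForallPairs; [|apply seq_NoDup].
    intros a b ha hb e. apply in_seq in ha, hb.
    destruct (Nat.lt_total a b) as [h|[h|h]]; [|exact h|]; exfalso; apply hinj.
    - exists a, b. split; [lia|exact e].
    - exists b, a. split; [lia|auto]. }
  assert (into_k : incl (map m (seq 0 j)) (seq 0 k)).
  { intros x hx. apply in_map_iff in hx as [i [<- hi]]. apply in_seq in hi.
    apply in_seq. specialize (hm i). lia. }
  pose proof (NoDup_incl_length nodup into_k) as hlen.
  rewrite length_map, !length_seq in hlen. lia.
Qed.

Lemma pigeonhole_blocks j k (M : {i : nat | i < j} -> {m : nat | m < k}) :
  k < j -> exists ii ii', proj1_sig ii < proj1_sig ii' /\ M ii = M ii'.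
Proof.
  intro hk.
  set (m i := match lt_dec i j with left p => proj1_sig (M (exist _ i p)) | right _ => 0 end).
  assert (hm : forall i (p : i < j), m i = proj1_sig (M (exist _ i p))).
  { intros i p. unfold m. destruct (lt_dec i j) as [p'|]; [|lia].
    rewrite (le_unique _ _ p p'). reflexivity. }
  destruct (pigeonhole m j k hk) as [i [i' [[hii' hi'] e]]].
  { intros i hi. rewrite (hm i hi). apply proj2_sig. }
  exists (exist _ i (Nat.lt_trans _ _ _ hii' hi')), (exist _ i' hi').
  split; [exact hii'|]. apply sig_nat_eq. rewrite <- !hm. exact e.
Qed.

(* Whether the end of block i of beta*j+1 lies in the set to be cleaved: the start
   of block 1 does (a non-limit point of a low block), the start of blocks 2 and 3
   does not, and the top point does iff j >= 3. *)
Definition end_label (j i : nat) : bool :=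
  if S i <? j then i =? 0 else 3 <=? j.

Lemma block_labels_differ j i i' : 2 <= j <= 4 -> i < i' -> i' < j ->
  end_label j i <> end_label j i' \/ (2 <=? i) <> (2 <=? i').
Proof.
  intros hj hii' hi'.
  assert (j = 2 \/ j = 3 \/ j = 4) as [-> | [-> | ->]] by lia;
  (destruct i as [|[|[|[|i]]]]; [| | | |lia]);
  (destruct i' as [|[|[|[|i']]]]; [| | | |lia]); try lia;
  unfold end_label; simpl; (left; discriminate) || (right; discriminate).
Qed.

Section WellOrder.
Variables (B : Type) (ltB : B -> B -> Prop).
Hypothesis hwo : well_order ltB.

Local Infix "≺" := ltB (at level 70).
Local Notation "x ≼ y" := (le_of B ltB x y) (at level 70).

Lemma lt_irrefl x : ~ x ≺ x.
Proof. apply hwo. Qed.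

Lemma lt_trans x y z : x ≺ y -> y ≺ z -> x ≺ z.
Proof. apply hwo. Qed.

Lemma lt_total x y : x ≺ y \/ x = y \/ y ≺ x.
Proof. apply hwo. Qed.

Lemma le_lt_trans x y z : x ≼ y -> y ≺ z -> x ≺ z.
Proof. intros [h|<-] h'; [exact (lt_trans _ _ _ h h')|exact h']. Qed.

Lemma lt_le_trans x y z : x ≺ y -> y ≼ z -> x ≺ z.
Proof. intros h [h'|<-]; [exact (lt_trans _ _ _ h h')|exact h]. Qed.

Lemma le_trans x y z : x ≼ y -> y ≼ z -> x ≼ z.
Proof. intros [h|<-] h'; [left; exact (lt_le_trans _ _ _ h h')|exact h']. Qed.

Lemma le_lt_false x y : x ≼ y -> y ≺ x -> False.
Proof. intros h h'. exact (lt_irrefl _ (le_lt_trans _ _ _ h h')). Qed.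

Lemma not_lt_le x y : ~ x ≺ y -> y ≼ x.
Proof.
  intro h. destruct (lt_total x y) as [h'|[<-|h']]; [contradiction|right|left]; auto.
Qed.

Lemma least_element (P : B -> Prop) :
  (exists x, P x) -> exists x, P x /\ forall y, P y -> x ≼ y.
Proof.
  intros [x0 Hx0]. apply NNPP; intro Hnone.
  assert (empty : forall x, ~ P x).
  { intro x. induction x as [x IH] using (well_founded_ind (proj1 hwo)).
    intro Px. apply Hnone. exists x. split; [exact Px|].
    intros y Py. apply not_lt_le. intro hyx. exact (IH y hyx Py). }
  exact (empty x0 Hx0).
Qed.

Definition maxB (a b : B) : B :=
  if excluded_middle_informative (a ≺ b) then b else a.

Lemma le_maxB_l a b : a ≼ maxB a b.
Proof.
  unfold maxB; destruct (excluded_middle_informative _); [left|right]; auto.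
Qed.

Lemma le_maxB_r a b : b ≼ maxB a b.
Proof.
  unfold maxB; destruct (excluded_middle_informative _) as [_|h]; [now right|].
  exact (not_lt_le _ _ h).
Qed.

Definition eventually (P : B -> Prop) : Prop := exists c, forall y, c ≺ y -> P y.

Lemma eventually_and (P Q : B -> Prop) :
  eventually P -> eventually Q -> eventually (fun y => P y /\ Q y).
Proof.
  intros [c1 h1] [c2 h2]. exists (maxB c1 c2). intros y hy. split.
  - apply h1. exact (le_lt_trans _ _ _ (le_maxB_l c1 c2) hy).
  - apply h2. exact (le_lt_trans _ _ _ (le_maxB_r c1 c2) hy).
Qed.

Definition is_limit (a : B) : Prop :=
  (exists z, z ≺ a) /\ forall z, z ≺ a -> exists w, z ≺ w /\ w ≺ a.

Definition is_successor (c s : B) : Prop := c ≺ s /\ forall y, y ≺ s -> y ≼ c.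

Lemma successor_not_limit c s : is_successor c s -> ~ is_limit s.
Proof.
  intros [hcs hs] [_ hlim]. destruct (hlim c hcs) as [w [hcw hws]].
  exact (le_lt_false _ _ (hs w hws) hcw).
Qed.

Lemma minimum_not_limit x0 : (forall y, ~ y ≺ x0) -> ~ is_limit x0.
Proof. intros hx0 [[z hz] _]. exact (hx0 z hz). Qed.

Definition increasing (s : nat -> B) : Prop := forall n, s n ≺ s (S n).

Lemma increasing_lt s : increasing s -> forall n m, n < m -> s n ≺ s m.
Proof.
  intros hs n m h. induction h as [|m _ IH]; [apply hs|exact (lt_trans _ _ _ IH (hs m))].
Qed.

Lemma increasing_le s : increasing s -> forall n m, n <= m -> s n ≼ s m.
Proof.
  intros hs n m h. destruct (Nat.eq_dec n m) as [<-|ne]; [now right|].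
  left. apply increasing_lt; [exact hs|lia].
Qed.

Lemma increasing_injective s : increasing s -> forall n m, s n = s m -> n = m.
Proof.
  intros hs n m e. destruct (Nat.lt_total n m) as [h|[h|h]]; [|exact h|];
    exfalso; pose proof (increasing_lt s hs _ _ h) as hlt; rewrite e in hlt;
    exact (lt_irrefl _ hlt).
Qed.

Definition is_sup (s : nat -> B) (a : B) : Prop :=
  (forall n, s n ≺ a) /\ forall z, z ≺ a -> exists n, z ≼ s n.

Lemma sup_of_increasing_is_limit s a : increasing s -> is_sup s a -> is_limit a.
Proof.
  intros hs [hub hleast]. split; [exists (s 0); apply hub|].
  intros z hz. destruct (hleast z hz) as [n hn].
  exists (s (S n)). split; [exact (le_lt_trans _ _ _ hn (hs n))|apply hub].
Qed.

Lemma bounded_has_sup s : (exists c, forall n, s n ≺ c) -> exists a, is_sup s a.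
Proof.
  intro hb. destruct (least_element _ hb) as [a [ha hmin]].
  exists a. split; [exact ha|]. intros z hz. apply NNPP; intro hnot.
  assert (hzb : forall n, s n ≺ z).
  { intro n. apply NNPP; intro h. apply hnot. exists n. exact (not_lt_le _ _ h). }
  exact (le_lt_false _ _ (hmin z hzb) hz).
Qed.

Lemma has_minimum : uncountable B -> exists x0, forall y, ~ y ≺ x0.
Proof.
  intro hunc.
  assert (inhabited : exists x : B, True).
  { apply NNPP; intro hempty. apply hunc. exists (fun _ => 0).
    intros x. exfalso. apply hempty. now exists x. }
  destruct (least_element (fun _ => True) inhabited) as [x0 [_ hmin]].
  exists x0. intros y hy. exact (le_lt_false _ _ (hmin y I) hy).
Qed.

Local Notation "p ⊏ q" := (ordpt_lt ltB _ p q) (at level 70).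

Lemma ordpt_lt_trans k (p q r : ordpt B k) : p ⊏ q -> q ⊏ r -> p ⊏ r.
Proof.
  destruct p as [[i a]|], q as [[i' a']|], r as [[i'' a'']|]; simpl; try tauto.
  intros [h|[e h]] [h'|[e' h']]; try (left; lia).
  right; split; [lia|exact (lt_trans _ _ _ h h')].
Qed.

Lemma ordpt_lt_total k (p q : ordpt B k) : p ⊏ q \/ p = q \/ q ⊏ p.
Proof.
  destruct p as [[i a]|], q as [[i' a']|]; simpl; auto.
  destruct (Nat.lt_total (proj1_sig i) (proj1_sig i')) as [h|[h|h]]; auto.
  destruct (lt_total a a') as [h'|[<-|h']]; auto.
  rewrite (sig_nat_eq k i i' h). auto.
Qed.

Lemma open_nbhd_in_block j (W : ordpt B j -> Prop) ii x z :
  ord_open _ (ordpt_lt ltB j) W -> W (Some (ii, x)) -> z ≺ x ->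
  exists c, c ≺ x /\ forall y, c ≺ y -> y ≼ x -> W (Some (ii, y)).
Proof.
  intros hW hx hz. destruct (hW _ hx) as [[hmin|[p [hp hP]]] _].
  - exfalso. apply (hmin (Some (ii, z))). simpl. right; auto.
  - assert (in_block : forall y, y ≼ x -> le_of _ (ordpt_lt ltB j) (Some (ii, y)) (Some (ii, x))).
    { intros y [hyx| ->]; [left; simpl; auto|right; reflexivity]. }
    destruct p as [[i' x']|]; simpl in hp; [|contradiction].
    destruct hp as [h|[e h]].
    + exists z. split; [exact hz|]. intros y _ hyx. apply hP; [simpl; auto|exact (in_block y hyx)].
    + exists x'. split; [exact h|]. intros y hy hyx. apply hP; [simpl; auto|exact (in_block y hyx)].
Qed.

Variable x0 : B.
Hypothesis hx0 : forall y, ~ y ≺ x0.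

Lemma minimum_lt d : d <> x0 -> x0 ≺ d.
Proof.
  intro hd. destruct (lt_total x0 d) as [h|[h|h]]; [exact h|congruence|].
  exfalso; exact (hx0 _ h).
Qed.

(* The point right after block ii of beta*j+1: the first point of block ii+1,
   or the top point when ii is the last block. *)
Definition block_end j (ii : {i : nat | i < j}) : ordpt B j :=
  match lt_dec (S (proj1_sig ii)) j with
  | left p => Some (exist _ (S (proj1_sig ii)) p, x0)
  | right _ => None
  end.

Lemma block_lt_end j ii y : Some (ii, y) ⊏ block_end j ii.
Proof. unfold block_end. destruct (lt_dec _ _); simpl; auto. Qed.

Lemma block_start_is_end k (mm : {i : nat | i < k}) m :
  proj1_sig mm = S m -> exists mc, Some (mm, x0) = block_end k mc.
Proof.
  intro e. assert (hm : m < k) by (destruct mm; simpl in *; lia).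
  exists (exist _ m hm). unfold block_end; simpl.
  destruct (lt_dec (S m) k) as [p|p]; [|destruct mm; simpl in *; lia].
  do 2 f_equal. apply sig_nat_eq. simpl. auto.
Qed.

Lemma top_is_end k : exists mc, None = block_end (S k) mc.
Proof.
  exists (exist _ k (Nat.lt_succ_diag_r k)). unfold block_end; simpl.
  destruct (lt_dec (S k) (S k)); [lia|reflexivity].
Qed.

Lemma below_block_end k mc g (p : ordpt B k) :
  Some (mc, g) ⊏ p -> p ⊏ block_end k mc -> exists w, p = Some (mc, w) /\ g ≺ w.
Proof.
  intros hgp hpe. destruct p as [[mm w]|]; [|contradiction].
  assert (same_block : proj1_sig mm = proj1_sig mc).
  { unfold block_end in hpe; destruct (lt_dec _ _) as [p|p]; simpl in hgp, hpe.
    - destruct hpe as [h|[_ h]]; [lia|exfalso; exact (hx0 _ h)].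
    - destruct mm as [mm' hmm]; simpl in *; lia. }
  simpl in hgp. destruct hgp as [h|[_ h]]; [lia|].
  exists w. split; [rewrite (sig_nat_eq _ _ _ same_block); reflexivity|exact h].
Qed.

Lemma open_nbhd_of_block_end j (W : ordpt B j -> Prop) ii :
  ord_open _ (ordpt_lt ltB j) W -> W (block_end j ii) ->
  eventually (fun y => W (Some (ii, y))).
Proof.
  intros hW hend. destruct (hW _ hend) as [[hmin|[p [hp hP]]] _].
  - exfalso. exact (hmin (Some (ii, x0)) (block_lt_end j ii x0)).
  - destruct p as [[i' x']|]; [|contradiction].
    assert (hle : proj1_sig i' <= proj1_sig ii).
    { unfold block_end in hp. destruct (lt_dec _ _) as [q|q]; simpl in hp.
      - destruct hp as [h|[_ h]]; [lia|exfalso; exact (hx0 _ h)].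
      - destruct i' as [i' hi']; simpl. lia. }
    exists x'. intros y hy. apply hP; [|left; apply block_lt_end].
    simpl. destruct (Nat.eq_dec (proj1_sig i') (proj1_sig ii)); [right|left]; auto; lia.
Qed.

Definition tends_to {k} (F : B -> ordpt B k) (L : ordpt B k) : Prop :=
  forall V, ord_open _ (ordpt_lt ltB k) V -> V L -> eventually (fun y => V (F y)).

Definition approaches_end {k} (F : B -> ordpt B k) mc : Prop :=
  forall g, eventually
    (fun y => F y = block_end k mc \/ exists w, F y = Some (mc, w) /\ g ≺ w).

Definition left_continuous_at {k} (F : B -> ordpt B k) (a : B) : Prop :=
  forall V, ord_open _ (ordpt_lt ltB k) V -> V (F a) ->
    exists c, c ≺ a /\ forall y, c ≺ y -> y ≼ a -> V (F y).

Lemma tends_to_above k (F : B -> ordpt B k) L p :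
  tends_to F L -> p ⊏ L -> eventually (fun y => p ⊏ F y).
Proof. intros hF h. exact (hF _ (upper_ray_open _ (ordpt_lt_trans k) p) h). Qed.

Lemma tends_to_below k (F : B -> ordpt B k) L p :
  tends_to F L -> L ⊏ p -> eventually (fun y => F y ⊏ p).
Proof. intros hF h. exact (hF _ (lower_ray_open _ (ordpt_lt_trans k) p) h). Qed.

Section Regular.
Hypothesis hunc : uncountable B.
Hypothesis hreg : regular ltB.

(* There is no largest element: regularity bounds a constant map on a nonempty
   initial segment, which exists as B has two distinct points. *)
Lemma no_maximum c : exists d, c ≺ d.
Proof.
  assert (two : exists x y, x ≺ y).
  { apply NNPP; intro H. apply hunc. exists (fun _ => 0). intros x y _.
    destruct (lt_total x y) as [h|[h|h]]; [| exact h |]; exfalso; apply H; eauto. }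
  destruct two as [x [y hxy]]. destruct (hreg y (fun _ => c)) as [d hd].
  exists d. exact (hd (exist _ x hxy)).
Qed.

Lemma successor_function : exists sc : B -> B, forall c, is_successor c (sc c).
Proof.
  apply choice. intro c.
  destruct (least_element _ (no_maximum c)) as [s [hcs hmin]].
  exists s. split; [exact hcs|]. intros y hys. apply not_lt_le. intro hcy.
  exact (le_lt_false _ _ (hmin y hcy) hys).
Qed.

Lemma successor_above c : exists s, c ≺ s /\ ~ is_limit s.
Proof.
  destruct successor_function as [sc hsc]. exists (sc c).
  split; [apply hsc|exact (successor_not_limit _ _ (hsc c))].
Qed.

(* The finite successors of the minimum are bounded: otherwise every point is
   one of them and the order is countable. *)
Lemma successor_chain_bounded sc :
  (forall c, is_successor c (sc c)) ->
  exists b, forall n, Nat.iter n sc x0 ≺ b.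
Proof.
  intros hsc. apply NNPP; intro hunb. apply hunc.
  set (t n := Nat.iter n sc x0).
  assert (below_chain : forall n b, b ≼ t n -> exists m, b = t m).
  { induction n as [|n IH]; intros b [hb|hb].
    - exfalso; exact (hx0 _ hb).
    - now exists 0.
    - apply IH. exact (proj2 (hsc (t n)) b hb).
    - now exists (S n). }
  assert (all_in_chain : forall b, exists m, b = t m).
  { intro b. apply NNPP; intro hb. apply hunb. exists b. intro n.
    destruct (lt_total (t n) b) as [h|[h|h]]; [exact h| |];
      exfalso; apply hb; apply (below_chain n); [right|left]; auto. }
  destruct (choice _ all_in_chain) as [G hG].
  exists G. intros x y e. rewrite (hG x), (hG y), e. reflexivity.
Qed.

(* cf > omega: every omega-sequence is bounded.  The sequence is re-indexed by the
   initial segment below a bound of the successor chain, and regularity applies. *)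
Lemma omega_sequence_bounded (s : nat -> B) : exists c, forall n, s n ≺ c.
Proof.
  destruct successor_function as [sc hsc].
  set (t n := Nat.iter n sc x0).
  assert (ht : increasing t) by (intro n; apply hsc).
  destruct (successor_chain_bounded sc hsc) as [b hb].
  destruct (nat_left_inverse t (increasing_injective t ht)) as [G hG].
  destruct (hreg b (fun x => s (G (proj1_sig x)))) as [c hc].
  exists c. intro n. specialize (hc (exist _ (t n) (hb n))). simpl in hc.
  rewrite hG in hc. exact hc.
Qed.

Lemma increasing_sup_limit (s : nat -> B) :
  increasing s -> exists a, is_sup s a /\ is_limit a.
Proof.
  intro hs. destruct (bounded_has_sup s (omega_sequence_bounded s)) as [a ha].
  exists a. split; [exact ha|exact (sup_of_increasing_is_limit s a hs ha)].
Qed.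

(* Above every point there is a limit point: the supremum of omega successors. *)
Lemma limit_above c : exists a, c ≺ a /\ is_limit a.
Proof.
  destruct successor_function as [sc hsc].
  set (t n := Nat.iter n sc c).
  destruct (increasing_sup_limit t (fun n => proj1 (hsc (t n)))) as [a [[hub _] hlim]].
  exists a. split; [exact (hub 0)|exact hlim].
Qed.

(* If F tends to a point that is not the start of a block >= 1 (nor the top),
   then F is eventually constant: regularity makes F eventually lie above all the
   points Some (mm, x), x < d, simultaneously. *)
Lemma tends_to_eventually_const k (F : B -> ordpt B k) mm d :
  tends_to F (Some (mm, d)) -> proj1_sig mm = 0 \/ d <> x0 ->
  eventually (fun y => F y = Some (mm, d)).
Proof.
  intros hF hmd. destruct successor_function as [sc hsc].
  assert (below : eventually (fun y => F y ⊏ Some (mm, sc d))).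
  { apply (tends_to_below k F _ _ hF). simpl. right. split; [reflexivity|apply hsc]. }
  assert (above : eventually (fun y => forall x, x ≺ d -> Some (mm, x) ⊏ F y)).
  { assert (each : forall x : {x | x ≺ d}, eventually (fun y => Some (mm, proj1_sig x) ⊏ F y)).
    { intros [x hx]. apply (tends_to_above k F _ _ hF). simpl. right. auto. }
    destruct (choice _ each) as [G hG]. destruct (hreg d G) as [C hC].
    exists C. intros y hy x hx. apply (hG (exist _ x hx)). exact (lt_trans _ _ _ (hC _) hy). }
  destruct (eventually_and _ _ below above) as [c hc]. exists c. intros y hy.
  destruct (hc y hy) as [hb ha]. destruct (F y) as [[mm' w]|]; simpl in hb; [|contradiction].
  assert (same_block : proj1_sig mm' = proj1_sig mm).
  { destruct hb as [h|[e _]]; [|exact e].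
    assert (hd : x0 ≺ d) by (apply minimum_lt; destruct hmd; [lia|auto]).
    specialize (ha x0 hd). simpl in ha. lia. }
  rewrite (sig_nat_eq _ _ _ same_block).
  destruct hb as [h|[_ h]]; [lia|]. destruct (proj2 (hsc d) w h) as [hwd| ->]; [|reflexivity].
  exfalso. specialize (ha w hwd). simpl in ha. destruct ha as [h'|[_ h']]; [lia|].
  exact (lt_irrefl w h').
Qed.

Lemma tends_to_below_block_end k (F : B -> ordpt B k) mc :
  tends_to F (block_end k mc) ->
  eventually (fun y => F y = block_end k mc \/ F y ⊏ block_end k mc).
Proof.
  intro hF. destruct successor_function as [sc hsc].
  unfold block_end in *. destruct (lt_dec _ _) as [p|p].
  - destruct (tends_to_below k F _ (Some (exist (fun i => i < k) _ p, sc x0)) hF) as [c hc].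
    { simpl. right. split; [reflexivity|apply hsc]. }
    exists c. intros y hy. specialize (hc y hy).
    destruct (F y) as [[mm w]|]; simpl in hc; [|contradiction].
    destruct hc as [h|[e h]]; [right; simpl; left; exact h|left].
    destruct (proj2 (hsc x0) w h) as [h'| ->]; [exfalso; exact (hx0 _ h')|].
    rewrite (sig_nat_eq k mm (exist (fun i => i < k) _ p) e). reflexivity.
  - exists x0. intros y _. destruct (F y) as [[mm w]|]; [right; exact I|left; reflexivity].
Qed.

Lemma tends_to_block_end k (F : B -> ordpt B k) mc :
  tends_to F (block_end k mc) -> approaches_end F mc.
Proof.
  intros hF g.
  assert (above : eventually (fun y => Some (mc, g) ⊏ F y)).
  { apply (tends_to_above k F _ _ hF). apply block_lt_end. }
  destruct (eventually_and _ _ above (tends_to_below_block_end k F mc hF)) as [c hc].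
  exists c. intros y hy. destruct (hc y hy) as [hup [heq|hlt]]; [left; exact heq|].
  right. exact (below_block_end k mc g _ hup hlt).
Qed.

Lemma tends_to_classify k (F : B -> ordpt B k) L :
  tends_to F L ->
  eventually (fun y => F y = L) \/ exists mc, L = block_end k mc /\ approaches_end F mc.
Proof.
  intro hF.
  assert (at_end : forall mc, L = block_end k mc ->
            exists mc, L = block_end k mc /\ approaches_end F mc).
  { intros mc ->. exists mc. split; [reflexivity|exact (tends_to_block_end k F mc hF)]. }
  destruct L as [[mm d]|].
  - destruct (classic (proj1_sig mm = 0 \/ d <> x0)) as [hmd|hmd].
    + left. exact (tends_to_eventually_const k F mm d hF hmd).
    + right. assert (d = x0) as -> by (apply NNPP; tauto).
      destruct (proj1_sig mm) as [|m] eqn:e; [tauto|].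
      destruct (block_start_is_end k mm m e) as [mc hmc]. exact (at_end mc hmc).
  - destruct k as [|k'].
    + left. exists x0. intros y _. destruct (F y) as [[[m hm] w]|]; [lia|reflexivity].
    + right. destruct (top_is_end k') as [mc hmc]. exact (at_end mc hmc).
Qed.

(* The position of a point of beta*k+1 inside its block (the top point counts as 0). *)
Definition position {k} (p : ordpt B k) : B :=
  match p with Some (_, w) => w | None => x0 end.

Definition closes {k} (F : B -> ordpt B k) mc (N : B -> B) : Prop :=
  forall b, (exists y w, b ≺ y /\ y ≺ N b /\ F y = Some (mc, w) /\ b ≺ w) /\
            (forall x, x ≺ b -> position (F x) ≺ N b).

Lemma closes_mono k (F : B -> ordpt B k) mc N N' :
  closes F mc N -> (forall b, N b ≼ N' b) -> closes F mc N'.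
Proof.
  intros hN hle b. destruct (hN b) as [[y [w [h1 [h2 h3]]]] hpos]. split.
  - exists y, w. split; [exact h1|]. split; [exact (lt_le_trans _ _ _ h2 (hle b))|exact h3].
  - intros x hx. exact (lt_le_trans _ _ _ (hpos x hx) (hle b)).
Qed.

(* A function approaching the end of block mc, without being eventually equal to
   it, has a closing function; the bound on positions comes from regularity. *)
Lemma closing_function_exists k (F : B -> ordpt B k) mc :
  approaches_end F mc -> (forall c, exists y, c ≺ y /\ F y <> block_end k mc) ->
  exists N, closes F mc N.
Proof.
  intros hT hG.
  assert (each : forall b, exists n,
            (exists y w, b ≺ y /\ y ≺ n /\ F y = Some (mc, w) /\ b ≺ w) /\
            (forall x, x ≺ b -> position (F x) ≺ n)).
  { intro b. destruct (hT b) as [c hc]. destruct (hG (maxB b c)) as [y [hy hne]].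
    destruct (hc y (le_lt_trans _ _ _ (le_maxB_r b c) hy)) as [e|[w [e hw]]];
      [contradiction|].
    destruct (hreg b (fun x => position (F (proj1_sig x)))) as [r hr].
    destruct (no_maximum (maxB y r)) as [n hn]. exists n. split.
    - exists y, w. split; [exact (le_lt_trans _ _ _ (le_maxB_l b c) hy)|].
      split; [exact (le_lt_trans _ _ _ (le_maxB_l y r) hn)|auto].
    - intros x hx. specialize (hr (exist _ x hx)). simpl in hr.
      exact (lt_trans _ _ _ hr (le_lt_trans _ _ _ (le_maxB_r y r) hn)). }
  destruct (choice _ each) as [N hN]. exists N. exact hN.
Qed.

Lemma closes_witnesses k (F : B -> ordpt B k) mc N s a :
  closes F mc N -> (forall n, s (S n) = N (s n)) -> (forall n, s n ≺ a) ->
  forall n, exists y w, s n ≺ y /\ y ≺ a /\ F y = Some (mc, w) /\ s n ≺ w /\ w ≺ a.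
Proof.
  intros hN hsN ha n. destruct (proj1 (hN (s n))) as [y [w [h1 [h2 [h3 h4]]]]].
  rewrite <- hsN in h2. exists y, w.
  split; [exact h1|]. split; [exact (lt_trans _ _ _ h2 (ha _))|].
  split; [exact h3|]. split; [exact h4|].
  pose proof (proj2 (hN (s (S n))) y h2) as hw. rewrite h3, <- hsN in hw.
  exact (lt_trans _ _ _ hw (ha _)).
Qed.

(* At the supremum a of the iterates of a closing function, a left-continuous F
   takes the value Some (mc, a): the values Some (mc, w) found above are cofinal in it. *)
Lemma closes_fixed_at_sup k (F : B -> ordpt B k) mc N s a :
  closes F mc N -> (forall n, s (S n) = N (s n)) -> increasing s -> is_sup s a ->
  left_continuous_at F a -> F a = Some (mc, a).
Proof.
  intros hN hsN hs [hub hleast] hC.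
  pose proof (closes_witnesses k F mc N s a hN hsN hub) as wit.
  destruct (ordpt_lt_total k (F a) (Some (mc, a))) as [hlt|[heq|hgt]];
    [exfalso|exact heq|exfalso].
  - assert (below_sn : exists n, F a ⊏ Some (mc, s n)).
    { destruct (F a) as [[mm d]|]; simpl in hlt; [|contradiction].
      destruct hlt as [h|[e h]]; [exists 0; simpl; left; exact h|].
      destruct (hleast d h) as [n hn]. exists (S n). simpl. right.
      split; [exact e|exact (le_lt_trans _ _ _ hn (hs n))]. }
    destruct below_sn as [n hn].
    destruct (hC _ (lower_ray_open _ (ordpt_lt_trans k) _) hn) as [c [hc hP]].
    destruct (hleast c hc) as [n2 hn2].
    destruct (wit (max n n2)) as [y [w [h1 [h2 [h3 [h4 _]]]]]].
    assert (hcy : c ≺ y).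
    { refine (le_lt_trans _ _ _ (le_trans _ _ _ hn2 _) h1).
      apply increasing_le; [exact hs|lia]. }
    specialize (hP y hcy (or_introl h2)). rewrite h3 in hP. simpl in hP.
    destruct hP as [h|[_ h]]; [lia|].
    refine (lt_irrefl w (lt_trans _ _ _ h (le_lt_trans _ _ _ _ h4))).
    apply increasing_le; [exact hs|lia].
  - destruct (hC _ (upper_ray_open _ (ordpt_lt_trans k) _) hgt) as [c [hc hP]].
    destruct (hleast c hc) as [n hn].
    destruct (wit n) as [y [w [h1 [h2 [h3 [_ h5]]]]]].
    specialize (hP y (le_lt_trans _ _ _ hn h1) (or_introl h2)). rewrite h3 in hP.
    simpl in hP. destruct hP as [h|[_ h]]; [lia|].
    exact (lt_irrefl a (lt_trans _ _ _ h h5)).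
Qed.

(* Two left-continuous functions approaching the end of the same block mc, neither
   eventually equal to it, agree at some limit point: the supremum of the iterates
   of a common closing function. *)
Lemma common_fixed_point k (F1 F2 : B -> ordpt B k) mc :
  approaches_end F1 mc -> approaches_end F2 mc ->
  (forall c, exists y, c ≺ y /\ F1 y <> block_end k mc) ->
  (forall c, exists y, c ≺ y /\ F2 y <> block_end k mc) ->
  (forall a, is_limit a -> left_continuous_at F1 a) ->
  (forall a, is_limit a -> left_continuous_at F2 a) ->
  exists a, is_limit a /\ F1 a = F2 a.
Proof.
  intros hT1 hT2 hG1 hG2 hC1 hC2.
  destruct (closing_function_exists k F1 mc hT1 hG1) as [N1 hN1].
  destruct (closing_function_exists k F2 mc hT2 hG2) as [N2 hN2].
  set (N b := maxB (N1 b) (N2 b)).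
  assert (hN1' : closes F1 mc N) by (apply (closes_mono k F1 mc N1); [exact hN1|intro; apply le_maxB_l]).
  assert (hN2' : closes F2 mc N) by (apply (closes_mono k F2 mc N2); [exact hN2|intro; apply le_maxB_r]).
  set (s n := Nat.iter n N x0).
  assert (hs : increasing s).
  { intro n. destruct (proj1 (hN1' (s n))) as [y [w [h1 [h2 _]]]]. exact (lt_trans _ _ _ h1 h2). }
  destruct (increasing_sup_limit s hs) as [a [hsup hlim]].
  exists a. split; [exact hlim|].
  rewrite (closes_fixed_at_sup k F1 mc N s a hN1' (fun n => eq_refl) hs hsup (hC1 a hlim)).
  rewrite (closes_fixed_at_sup k F2 mc N s a hN2' (fun n => eq_refl) hs hsup (hC2 a hlim)).
  reflexivity.
Qed.

Section Cleaving.
Variables (j k : nat) (f : ordpt B j -> ordpt B k).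
Hypothesis hf : ord_continuous (ordpt_lt ltB j) (ordpt_lt ltB k) f.

Definition cleaving_set (p : ordpt B j) : Prop :=
  match p with
  | Some (ii, x) => (is_limit x <-> 2 <= proj1_sig ii)
  | None => 3 <= j
  end.

Hypothesis hsep : forall p q, cleaving_set p -> ~ cleaving_set q -> f p <> f q.

Lemma separates p q : (cleaving_set p <-> ~ cleaving_set q) -> f p <> f q.
Proof.
  intro hpq. destruct (classic (cleaving_set p)) as [hp|hp].
  - apply hsep; tauto.
  - intro e. apply (hsep q p); [tauto|exact hp|auto].
Qed.

(* end_label describes the block ends (x0 is not a limit point). *)
Lemma block_end_in_set ii :
  cleaving_set (block_end j ii) <-> end_label j (proj1_sig ii) = true.
Proof.
  unfold block_end, end_label. destruct (lt_dec (S (proj1_sig ii)) j) as [p|p].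
  - simpl. rewrite (proj2 (Nat.ltb_lt _ _) p). pose proof (minimum_not_limit x0 hx0) as hnl.
    destruct (proj1_sig ii) as [|i]; simpl; split; intro h; auto.
    + split; intro; [contradiction|lia].
    + exfalso. apply hnl, h. lia.
    + discriminate.
  - rewrite (proj2 (Nat.ltb_ge _ _) (proj1 (Nat.nlt_ge _ _) p)). exact (iff_sym (Nat.leb_le 3 j)).
Qed.

Lemma limit_points_separated ii ii' a :
  is_limit a -> (2 <=? proj1_sig ii) <> (2 <=? proj1_sig ii') ->
  (cleaving_set (Some (ii, a)) <-> ~ cleaving_set (Some (ii', a))).
Proof.
  intros ha hne. simpl.
  destruct (Nat.leb_spec0 2 (proj1_sig ii)), (Nat.leb_spec0 2 (proj1_sig ii'));
    [congruence|tauto|tauto|congruence].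
Qed.

Lemma mixed_tail ii c : exists y1 y2, c ≺ y1 /\ c ≺ y2 /\
  (cleaving_set (Some (ii, y1)) <-> ~ cleaving_set (Some (ii, y2))).
Proof.
  destruct (successor_above c) as [y1 [h1 hnl]]. destruct (limit_above c) as [y2 [h2 hl]].
  exists y1, y2. split; [exact h1|]. split; [exact h2|]. simpl. tauto.
Qed.

Lemma block_tends_to_end ii :
  tends_to (fun y => f (Some (ii, y))) (f (block_end j ii)).
Proof.
  intros V hV hVe. exact (open_nbhd_of_block_end j (fun p => V (f p)) ii (hf V hV) hVe).
Qed.

Lemma block_left_continuous ii a :
  is_limit a -> left_continuous_at (fun y => f (Some (ii, y))) a.
Proof.
  intros [[z hz] _] V hV hVa. exact (open_nbhd_in_block j (fun p => V (f p)) ii a z (hf V hV) hVa hz).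
Qed.

Lemma block_not_eventually_end ii c :
  exists y, c ≺ y /\ f (Some (ii, y)) <> f (block_end j ii).
Proof.
  destruct (mixed_tail ii c) as [y1 [y2 [h1 [h2 hmix]]]].
  destruct (classic (cleaving_set (Some (ii, y1)) <-> ~ cleaving_set (block_end j ii))).
  - exists y1. split; [exact h1|]. apply separates. assumption.
  - exists y2. split; [exact h2|]. apply separates. tauto.
Qed.

Lemma block_image ii : exists mc,
  f (block_end j ii) = block_end k mc /\ approaches_end (fun y => f (Some (ii, y))) mc.
Proof.
  destruct (tends_to_classify k _ _ (block_tends_to_end ii)) as [[c hc]|happ]; [|exact happ].
  exfalso. destruct (mixed_tail ii c) as [y1 [y2 [h1 [h2 hmix]]]].
  apply (separates _ _ hmix). rewrite (hc y1 h1), (hc y2 h2). reflexivity.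
Qed.

Hypothesis hj : 2 <= j <= 4.

(* Two distinct blocks cannot approach the end of the same target block: either
   their ends, which then have the same image, are separated by the set, or their
   limit points are, and the two blocks agree at some common limit point. *)
Lemma blocks_distinct_targets ii ii' mc :
  proj1_sig ii < proj1_sig ii' ->
  f (block_end j ii) = block_end k mc -> approaches_end (fun y => f (Some (ii, y))) mc ->
  f (block_end j ii') = block_end k mc -> approaches_end (fun y => f (Some (ii', y))) mc ->
  False.
Proof.
  intros hlt e1 T1 e2 T2.
  destruct (block_labels_differ j _ _ hj hlt (proj2_sig ii')) as [hend|hlim].
  - apply (separates (block_end j ii) (block_end j ii')); [|congruence].
    rewrite !block_end_in_set.
    destruct (end_label j (proj1_sig ii)), (end_label j (proj1_sig ii')); intuition congruence.
  - destruct (common_fixed_point k _ _ mc T1 T2) as [a [ha heq]].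
    + rewrite <- e1. apply block_not_eventually_end.
    + rewrite <- e2. apply block_not_eventually_end.
    + apply block_left_continuous.
    + apply block_left_continuous.
    + exact (separates _ _ (limit_points_separated ii ii' a ha hlim) heq).
Qed.

End Cleaving.

End Regular.

End WellOrder.

Theorem lemma5p1 (B : Type) (ltB : B -> B -> Prop)
  (hwo : well_order ltB) (hunc : uncountable B) (hreg : regular ltB)
  (j k : nat) (hj : 2 <= j <= 4) (hk : k < j) :
  ~ cleavable (ordpt_lt ltB j) (ordpt_lt ltB k).
Proof.
  intro hcl.
  destruct (has_minimum B ltB hwo hunc) as [x0 hx0].
  destruct (hcl (cleaving_set B ltB j)) as [f [hf hsep]].
  destruct (choice _ (block_image B ltB hwo x0 hx0 hunc hreg j k f hf hsep)) as [M hM].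
  destruct (pigeonhole_blocks j k M hk) as [ii [ii' [hlt e]]].
  destruct (hM ii) as [e1 T1], (hM ii') as [e2 T2]. rewrite e in e1, T1.
  exact (blocks_distinct_targets B ltB hwo x0 hx0 hunc hreg j k f hf hsep hj
           ii ii' (M ii') hlt e1 T1 e2 T2).
Qed.
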